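(* Let $\mathscr{S}=(T,S,\sigma,\mu,\tau_T,\tau_S)$ be a relaxed scenario. If $G_{=}(\mathscr{S})$ contains an induced path $a-b-c-d$ on four vertices, then either ($ad\in E(G_{<}(\mathscr{S}))$ and $ac,bd\in E(G_{>}(\mathscr{S}))$) or ($ad\in E(G_{>}(\mathscr{S}))$ and $ac,bd\in E(G_{<}(\mathscr{S}))$). In either case, both $\{a,b,d\}$ and $\{a,c,d\}$ are rainbow triangles.
   Context: All trees are planted phylogenetic trees: a tree $T$ has a distinguished vertex $0_T$ of degree $1$ whose unique neighbor $\rho_T$ is the root, and every vertex other than $0_T$ and the leaves $L(T)$ has at least two children. For $x,y\in V(T)$ write $y\preceq_T x$ if $x$ lies on the path from $0_T$ to $y$; edges are written $uv$ with $v\prec_T u$. $\mathrm{lca}_T$ denotes the last common ancestor. A time map for $T$ is $\tau_T\colon V(T)\to\mathbb{R}$ with $\tau_T(x)<\tau_T(y)$ whenever $x\prec_T y$. A relaxed scenario $\mathscr{S}=(T,S,\sigma,\mu,\tau_T,\tau_S)$ consists of a gene tree $T$ with time map $\tau_T$, a species tree $S$ with time map $\tau_S$, a map $\sigma\colon L(T)\to M$ with $M\subseteq L(S)$, and a map $\mu\colon V(T)\to V(S)\cup E(S)$ such that (S0) $\mu(x)=0_S$ iff $x=0_T$; (S1) $\mu(x)\in L(S)$ iff $x\in L(T)$, in which case $\mu(x)=\sigma(x)$; (S2) if $\mu(x)\in V(S)$ then $\tau_S(\mu(x))=\tau_T(x)$; (S3) if $\mu(x)=uv\in E(S)$ then $\tau_S(v)<\tau_T(x)<\tau_S(u)$.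 The graphs $G_{=}(\mathscr{S})$, $G_{<}(\mathscr{S})$, $G_{>}(\mathscr{S})$ have vertex set $L(T)$, and for distinct $x,y$ the pair $xy$ is an edge of $G_{=}(\mathscr{S})$, $G_{<}(\mathscr{S})$, resp. $G_{>}(\mathscr{S})$ iff $\tau_T(\mathrm{lca}_T(x,y))$ is $=$, $<$, resp. $>$ than $\tau_S(\mathrm{lca}_S(\sigma(x),\sigma(y)))$. A rainbow triangle is a set of three vertices whose three pairs lie in three different graphs among $G_{<}(\mathscr{S})$, $G_{=}(\mathscr{S})$, $G_{>}(\mathscr{S})$. *)

From HB Require Import structures.
From mathcomp Require Import all_boot all_order all_algebra.
From mathcomp Require Import reals.
Set Implicit Arguments. Unset Strict Implicit. Unset Printing Implicit Defensive.
Import Order.TTheory GRing.Theory Num.Theory.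
Local Open Scope ring_scope.

(* A planted tree on a finite vertex type V is encoded by its distinguished
   vertex [z] (= 0_T) and a parent map [par] with [par z = z]; the edges are
   the pairs (par v, v) for v <> z. *)

Section Trees.
Variable V : finType.
Variables (z : V) (par : V -> V).

(* y ⪯ x  (x lies on the path from 0 to y): x is reached from y by parents *)
Definition preceq (y x : V) : bool := fconnect par y x.
Definition prec (y x : V) : bool := preceq y x && (y != x).

Definition children (v : V) : {set V} := [set w | (w != z) && (par w == v)].

Definition is_leaf (v : V) : bool := (v != z) && (children v == set0).

(* planted phylogenetic tree: every vertex reaches 0 (so the parent graph is
   a tree rooted at 0), 0 has degree 1 (exactly one child, the root rho), and
   every vertex other than 0 and the leaves has at least two children. *)
Definition planted_phylo : Prop :=
  [/\ par z = z,
      forall v, preceq v z,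
      #|children z| = 1%N &
      forall v, v != z -> ~~ is_leaf v -> (2 <= #|children v|)%N].

Definition lca (x y : V) : V :=
  odflt z [pick w | [&& preceq x w, preceq y w &
                      [forall u, (preceq x u && preceq y u) ==> preceq w u]]].

Definition time_map (R : realType) (t : V -> R) : Prop :=
  forall x y, prec x y -> t x < t y.
End Trees.

(* image of mu: a vertex of S, or an edge of S; [OnE v] denotes the edge
   (par v, v) of S (requiring v <> 0_S). *)
Inductive vert_or_edge (V : Type) := OnV of V | OnE of V.

Section Scenario.
Variables (R : realType) (VT VS : finType).
Variables (zT : VT) (parT : VT -> VT) (zS : VS) (parS : VS -> VS).
Variables (sigma : VT -> VS) (mu : VT -> vert_or_edge VS).
Variables (tT : VT -> R) (tS : VS -> R).

Definition relaxed_scenario : Prop :=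
  planted_phylo zT parT /\ planted_phylo zS parS /\
  time_map parT tT /\ time_map parS tS /\
  (* sigma : L(T) -> M ⊆ L(S) (values off L(T) are irrelevant) *)
  (forall x, is_leaf zT parT x -> is_leaf zS parS (sigma x)) /\
  (forall x, mu x = OnV zS <-> x = zT) /\
  (forall x, (exists v, mu x = OnV v /\ is_leaf zS parS v) <-> is_leaf zT parT x) /\
  (forall x, is_leaf zT parT x -> mu x = OnV (sigma x)) /\
  (forall x v, mu x = OnV v -> tS v = tT x) /\
  (forall x v, mu x = OnE v -> v != zS /\ tS v < tT x < tS (parS v)).

Inductive graph_kind := GLt | GEq | GGt.

Definition cmp_kind (k : graph_kind) (a b : R) : bool :=
  match k with GLt => a < b | GEq => a == b | GGt => a > b end.

Definition gedge (k : graph_kind) (x y : VT) : bool :=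
  [&& is_leaf zT parT x, is_leaf zT parT y, x != y &
      cmp_kind k (tT (lca zT parT x y)) (tS (lca zS parS (sigma x) (sigma y)))].

Definition rainbow (x y w : VT) : Prop :=
  exists k1 k2 k3 : graph_kind,
    [/\ k1 <> k2, k1 <> k3, k2 <> k3 &
        [/\ gedge k1 x y, gedge k2 y w & gedge k3 x w]].

Definition induced_P4_eq (a b c d : VT) : Prop :=
  [/\ uniq [:: a; b; c; d],
      [/\ gedge GEq a b, gedge GEq b c & gedge GEq c d] &
      [/\ ~~ gedge GEq a c, ~~ gedge GEq b d & ~~ gedge GEq a d]].
End Scenario.

From mathcomp Require Import all_boot all_order all_algebra.
From mathcomp Require Import reals.
Set Implicit Arguments. Unset Strict Implicit. Unset Printing Implicit Defensive.
Import Order.TTheory GRing.Theory Num.Theory.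
Local Open Scope ring_scope.

(* Both u(x,y) = tau_T (lca_T x y) and v(x,y) = tau_S (lca_S (sigma x) (sigma y))
   are ultrametrics in the weak sense (symmetric, with the strong triangle
   inequality), since the ancestors of a vertex form a chain on which a time
   map is monotone; so on every triangle each of them attains its maximum
   twice.  If u and v agree on the path a-b-c-d but on none of its chords,
   this forces one common value p on the three path edges.  The chord ac is
   then strictly below p in one of them, say u; this makes u(ad) = p > v(ad),
   and then v(bd) = p > u(bd). *)

Section Ultrametric.
Local Open Scope order_scope.
Variables (disp : Order.disp_t) (R : orderType disp).

Definition ultrametric (T : Type) (u : T -> T -> R) : Prop :=
  (forall x y, u x y = u y x) /\
  (forall x y w, u x w <= Order.max (u x y) (u y w)).

Variable T : Type.

Lemma ultrametric_comp (S : Type) (f : S -> T) (u : T -> T -> R) :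
  ultrametric u -> ultrametric (fun x y => u (f x) (f y)).
Proof. by case=> uC u_max; split=> [x y | x y w]; [apply: uC | apply: u_max]. Qed.

Lemma ultrametric_isosceles (u : T -> T -> R) x y w :
  ultrametric u -> u x y < u y w -> u x w = u y w.
Proof.
case=> uC u_max lt_xy_yw; apply/le_anti/andP; split.
  by rewrite (le_trans (u_max x y w)) // ge_max lexx ltW.
by have := u_max y x w; rewrite le_max [u y x]uC leNgt lt_xy_yw.
Qed.

Section TwoUltrametrics.
Variables u v : T -> T -> R.
Hypotheses (uU : ultrametric u) (vU : ultrametric v).

Lemma ultrametric_agree x y w :
  u x y = v x y -> u y w = v y w -> u x y != u y w -> u x w = v x w.
Proof.
move=> Exy Eyw; have [uC _] := uU; have [vC _] := vU.
case: ltgtP => // [lt_u | gt_u] _.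
  have lt_v : v x y < v y w by rewrite -Exy -Eyw.
  by rewrite (ultrametric_isosceles uU lt_u) (ultrametric_isosceles vU lt_v).
have gt_u' : u w y < u y x by rewrite uC [u y x]uC.
have gt_v : v w y < v y x by rewrite vC [v y x]vC -Exy -Eyw.
rewrite [u x w]uC [v x w]vC (ultrametric_isosceles uU gt_u').
by rewrite (ultrametric_isosceles vU gt_v) uC vC.
Qed.

Lemma ultrametric_P4_chords a b c d :
  u a b = v a b -> u b c = v b c -> u c d = v c d ->
  u b d != v b d -> u a d != v a d -> u a c < v a c ->
  v a d < u a d /\ u b d < v b d.
Proof.
move=> Eab Ebc Ecd Nbd Nad lt_ac.
have [uC u_max] := uU; have [vC v_max] := vU.
have Eab_bc : u a b = u b c.
  case: (eqVneq (u a b) (u b c)) => // ne.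
  by rewrite (ultrametric_agree Eab Ebc ne) ltxx in lt_ac.
have Ebc_cd : u b c = u c d.
  case: (eqVneq (u b c) (u c d)) => // ne.
  by rewrite (ultrametric_agree Ebc Ecd ne) eqxx in Nbd.
set p := u c d in Ebc_cd.
have vac_le : v a c <= p.
  by rewrite (le_trans (v_max a b c)) // -Eab -Ebc Eab_bc Ebc_cd maxxx.
have uad : u a d = p.
  by apply: (ultrametric_isosceles uU); exact: lt_le_trans vac_le.
have vad_le : v a d <= p.
  by rewrite (le_trans (v_max a c d)) // ge_max vac_le -Ecd lexx.
have vad_lt : v a d < p by rewrite lt_neqAle vad_le andbT -uad eq_sym.
have vbd : v b d = p.
  have lt_da_ab : v d a < v a b by rewrite vC -Eab Eab_bc Ebc_cd.
  by rewrite vC (ultrametric_isosceles vU lt_da_ab) -Eab Eab_bc.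
have ubd_le : u b d <= p by rewrite (le_trans (u_max b c d)) // Ebc_cd maxxx.
by rewrite uad vad_lt vbd lt_neqAle ubd_le -vbd Nbd.
Qed.

End TwoUltrametrics.
End Ultrametric.

Lemma lcaC (V : finType) (z : V) (par : V -> V) x y :
  lca z par x y = lca z par y x.
Proof.
rewrite /lca; congr (odflt _ _); apply: eq_pick => w /=.
by rewrite andbCA; congr [&& _, _ & _]; apply: eq_forallb => u; rewrite andbC.
Qed.

Section PlantedTree.
Variables (V : finType) (z : V) (par : V -> V).

Lemma preceq_iter n x : preceq par x (iter n par x).
Proof. exact: fconnect_iter. Qed.

Lemma preceq_total x y w :
  preceq par x y -> preceq par x w -> preceq par y w || preceq par w y.
Proof.
move=> /iter_findex <- /iter_findex <-.
set i := findex par x y; set j := findex par x w.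
have [le_ij | /ltnW le_ji] := leqP i j.
  by rewrite -(subnK le_ij) iterD preceq_iter.
by rewrite -(subnK le_ji) iterD preceq_iter orbT.
Qed.

Hypothesis reach_z : forall v, preceq par v z.

Lemma lca_spec x y :
  [/\ preceq par x (lca z par x y), preceq par y (lca z par x y) &
      forall w, preceq par x w -> preceq par y w -> preceq par (lca z par x y) w].
Proof.
have reach_y : exists n, preceq par y (iter n par x).
  by exists (findex par x z); rewrite (iter_findex (reach_z x)).
have [k yk k_min] := ex_minnP reach_y.
rewrite /lca; case: pickP => [w /and3P[xw yw /forallP w_min] | no_lca] /=.
  by split=> // u xu yu; apply: (implyP (w_min u)); rewrite xu.
suff k_min' : [forall w, preceq par x w && preceq par y w ==>
                          preceq par (iter k par x) w].
  by move: (no_lca (iter k par x)); rewrite /= preceq_iter yk k_min'.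
apply/forallP => w; apply/implyP => /andP[xw yw].
have le_kw : (k <= findex par x w)%N by apply: k_min; rewrite iter_findex.
by rewrite -(iter_findex xw) -(subnK le_kw) iterD preceq_iter.
Qed.

Variables (R : realType) (t : V -> R).
Hypothesis t_time : time_map par t.

Lemma time_map_mono x y : preceq par x y -> t x <= t y.
Proof.
move=> xy; have [-> // | ne] := eqVneq x y.
by apply/ltW/t_time; rewrite /prec xy ne.
Qed.

Lemma lca_time_ultrametric : ultrametric (fun x y => t (lca z par x y)).
Proof.
split=> [x y | x y w]; first by rewrite lcaC.
have [x_xy y_xy _] := lca_spec x y; have [y_yw w_yw _] := lca_spec y w.
have [_ _ xw_min] := lca_spec x w.
rewrite le_max; apply/orP.
have /orP[xy_yw | yw_xy] := preceq_total y_xy y_yw.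
  by right; apply/time_map_mono/xw_min => //; apply: connect_trans xy_yw.
by left; apply/time_map_mono/xw_min => //; apply: connect_trans yw_xy.
Qed.

End PlantedTree.

Theorem lemma19 (R : realType) (VT VS : finType)
    (zT : VT) (parT : VT -> VT) (zS : VS) (parS : VS -> VS)
    (sigma : VT -> VS) (mu : VT -> vert_or_edge VS)
    (tT : VT -> R) (tS : VS -> R) :
  relaxed_scenario zT parT zS parS sigma mu tT tS ->
  forall a b c d : VT,
    is_leaf zT parT a -> is_leaf zT parT b ->
    is_leaf zT parT c -> is_leaf zT parT d ->
    induced_P4_eq zT parT zS parS sigma tT tS a b c d ->
    ((gedge zT parT zS parS sigma tT tS GLt a d /\
      gedge zT parT zS parS sigma tT tS GGt a c /\
      gedge zT parT zS parS sigma tT tS GGt b d) \/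
     (gedge zT parT zS parS sigma tT tS GGt a d /\
      gedge zT parT zS parS sigma tT tS GLt a c /\
      gedge zT parT zS parS sigma tT tS GLt b d)) /\
    rainbow zT parT zS parS sigma tT tS a b d /\
    rainbow zT parT zS parS sigma tT tS a c d.
Proof.
move=> [[_ reachT _ _] [[_ reachS _ _] [timeT [timeS _]]]] a b c d La Lb Lc Ld.
move=> [+ [Gab Gbc Gcd] [Nac Nbd Nad]].
rewrite /= !inE !negb_or => /and4P[/and3P[nab nac nad] /andP[nbc nbd] ncd _].
pose u x y := tT (lca zT parT x y).
pose v x y := tS (lca zS parS (sigma x) (sigma y)).
have uU : ultrametric u := lca_time_ultrametric reachT timeT.
have vU : ultrametric v :=
  ultrametric_comp sigma (lca_time_ultrametric reachS timeS).
pose G := gedge zT parT zS parS sigma tT tS.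
have GE k x y : is_leaf zT parT x -> is_leaf zT parT y -> x != y ->
    G k x y = cmp_kind k (u x y) (v x y).
  by move=> Lx Ly nxy; rewrite /G /gedge Lx Ly nxy.
have [Eab Ebc Ecd] : [/\ u a b = v a b, u b c = v b c & u c d = v c d].
  by move: Gab Gbc Gcd; rewrite -/G !GE // => /eqP -> /eqP -> /eqP ->.
have [Mac Mbd Mad] : [/\ u a c != v a c, u b d != v b d & u a d != v a d].
  by move: Nac Nbd Nad; rewrite -/G !GE.
suff [[Gad [Gac Gbd]] | [Gad [Gac Gbd]]] :
    (G GLt a d /\ G GGt a c /\ G GGt b d) \/
    (G GGt a d /\ G GLt a c /\ G GLt b d).
- by split; [left | split; [exists GEq, GGt, GLt | exists GGt, GEq, GLt]].
- by split; [right | split; [exists GEq, GLt, GGt | exists GLt, GEq, GGt]].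
rewrite !GE //=; case: (ltgtP (u a c) (v a c)) Mac => [lt_ac | gt_ac | //] _.
  by have [-> ->] := ultrametric_P4_chords uU vU Eab Ebc Ecd Mbd Mad lt_ac; right.
rewrite eq_sym in Mbd; rewrite eq_sym in Mad.
by have [-> ->] := ultrametric_P4_chords vU uU (esym Eab) (esym Ebc) (esym Ecd)
  Mbd Mad gt_ac; left.
Qed.
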